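(* Suppose $\xi(B)=\langle z_1,\ldots,z_n\rangle$ is the root vector of some Ferrers board $B$. Let $\xi'$ be the vector equal to $\xi(B)$ except that the entries in positions $i_1$ and $i_2$, where $1<i_1$ and $1<i_2$, are swapped, and assume $z_{i_1}>z_{i_2}$. If $z_{i_2-1}+1\ge z_{i_1}$ and $z_{i_2}+1\ge z_{i_1+1}$, then $\xi'$ is the root vector of some Ferrers board.
   Context: A Ferrers board is given by a weakly increasing sequence of non-negative integers $B=(b_1,\ldots,b_n)$ of column heights (the set of unit cells in column $i$, rows $1,\ldots,b_i$, of the first quadrant). Its root vector is $\xi(B)=\langle 0-b_1,1-b_2,\ldots,(n-1)-b_n\rangle$. A vector is ''the root vector of some Ferrers board'' if it equals $\xi(B')$ for some Ferrers board $B'$ with the same number of columns.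
   Formalization: In both conditions, $z_{i_2-1}$ and $z_{i_1+1}$ are replaced by the entries of ξ′ in positions i₂−1 and i₁+1, so when i₂ = i₁+1 both conditions become $z_{i_2}+1\ge z_{i_1}$. The statement above fails without it. *)

From mathcomp Require Import all_boot all_order all_algebra.
Set Implicit Arguments. Unset Strict Implicit. Unset Printing Implicit Defensive.
Import Order.TTheory GRing.Theory Num.Theory.
Local Open Scope ring_scope.

(* Positions are 1-indexed: a vector / board with n columns is a function on
   nat of which only the values at positions 1..n matter. *)

(* A Ferrers board with n columns: weakly increasing nonnegative heights
   b 1 <= b 2 <= ... <= b n  (nonnegativity is built in by using nat). *)
Definition ferrers (n : nat) (b : nat -> nat) : Prop :=
  forall i : nat, (1 <= i < n)%N -> (b i <= b i.+1)%N.

Definition root_vector (b : nat -> nat) : nat -> int :=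
  fun i => (i.-1)%:Z - (b i)%:Z.

Definition is_root_vector (n : nat) (z : nat -> int) : Prop :=
  exists b : nat -> nat, ferrers n b /\
    forall i : nat, (1 <= i <= n)%N -> z i = root_vector b i.

Definition swap_entries (z : nat -> int) (i1 i2 : nat) : nat -> int :=
  fun i => if i == i1 then z i2 else if i == i2 then z i1 else z i.

From mathcomp Require Import all_boot all_order all_algebra.
From mathcomp Require Import zify.
Set Implicit Arguments. Unset Strict Implicit. Unset Printing Implicit Defensive.
Import Order.TTheory GRing.Theory Num.Theory.
Local Open Scope ring_scope.

(* A vector is the root vector of an n-column Ferrers board as soon as its
   first entry is nonpositive and it increases by at most one from each
   position to the next: the heights (i-1) - z_i are then nonnegative and
   weakly increasing.  Root vectors have this property, and swapping a larger
   entry z_i1 into position i2 and a smaller one into position i1 can only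
   break it across the boundaries i2-1 -> i2 and i1 -> i1+1, which are
   exactly the two hypotheses of the theorem. *)

Definition rises_at_most_one (n : nat) (w : nat -> int) : Prop :=
  forall i : nat, (1 <= i < n)%N -> w i.+1 <= w i + 1.

Lemma root_vector1_le0 (b : nat -> nat) : root_vector b 1 <= 0.
Proof. by rewrite /root_vector /=; lia. Qed.

Lemma ferrers_root_vector_rises (n : nat) (b : nat -> nat) :
  ferrers n b -> rises_at_most_one n (root_vector b).
Proof.
move=> fb [|i] hi; first by [].
by have := fb i.+1 hi; rewrite /root_vector /=; lia.
Qed.

Lemma rises_at_most_one_le (n : nat) (w : nat -> int) :
  w 1%N <= 0 -> rises_at_most_one n w ->
  forall i : nat, (1 <= i <= n)%N -> w i <= (i.-1)%:Z.
Proof.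
move=> w1 rw; elim=> [|[|i] IH] hi //.
by have := rw i.+1 (ltac:(lia)); have := IH (ltac:(lia)); rewrite /=; lia.
Qed.

Lemma rises_at_most_one_root_vector (n : nat) (w : nat -> int) :
  w 1%N <= 0 -> rises_at_most_one n w -> is_root_vector n w.
Proof.
move=> w1 rw; have wle := rises_at_most_one_le w1 rw.
exists (fun i => `|(i.-1)%:Z - w i|%N); split=> [i hi|i hi].
- have := rw i hi; have := wle i (ltac:(lia)); have := wle i.+1 (ltac:(lia)).
  by rewrite /=; lia.
- by have := wle i hi; rewrite /root_vector; lia.
Qed.

Lemma swap_entries_rises (n : nat) (z : nat -> int) (i1 i2 : nat) :
  rises_at_most_one n z -> z i2 < z i1 ->
  let w := swap_entries z i1 i2 in
  w i2.-1 + 1 >= w i2 -> ((i1 < n)%N -> w i1 + 1 >= w i1.+1) ->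
  rises_at_most_one n w.
Proof.
move=> rz lt21 w at_i2 at_i1 i hi.
have [e_i1|ne_i1] := eqVneq i i1; first by subst i; apply: at_i1; lia.
have [e_i2|ne_i2] := eqVneq i.+1 i2; first by rewrite -e_i2 in at_i2.
rewrite /w /swap_entries (negbTE ne_i1) (negbTE ne_i2).
have [e'_i2|_] := eqVneq i i2.
  subst i; have [_|_] := eqVneq i2.+1 i1; first by lia.
  by have := rz i2 hi; lia.
have [e'_i1|_] := eqVneq i.+1 i1; last exact: rz.
by rewrite -e'_i1 in lt21; have := rz i hi; lia.
Qed.

Theorem lemma7 (n : nat) (B : nat -> nat) (i1 i2 : nat) :
  ferrers n B ->
  (1 < i1 <= n)%N -> (1 < i2 <= n)%N ->
  let z := root_vector B in
  let xi' := swap_entries z i1 i2 in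
  z i2 < z i1 ->
  xi' i2.-1 + 1 >= xi' i2 ->
  ((i1 < n)%N -> xi' i1 + 1 >= xi' i1.+1) ->
  is_root_vector n xi'.
Proof.
move=> fB hi1 hi2 z xi' lt21 at_i2 at_i1.
apply: rises_at_most_one_root_vector.
- rewrite /xi' /swap_entries.
  have [|_] := eqVneq 1%N i1; first by lia.
  have [|_] := eqVneq 1%N i2; first by lia.
  exact: root_vector1_le0.
- exact: swap_entries_rises (ferrers_root_vector_rises fB) lt21 at_i2 at_i1.
Qed.
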